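(* Let $X$ be a real Hausdorff locally convex topological vector space and let $f,g:X\to\overline{\mathbb R}$ be proper, convex and lower semicontinuous. Let $U\subseteq\operatorname{dom} f\cap\operatorname{dom} g$ be segment-dense in $\operatorname{dom} f\cap\operatorname{dom} g$ and suppose $f(u)=g(u)$ for all $u\in U$. Then $f=g$ on $\operatorname{dom} f\cap\operatorname{dom} g$.
   Context: $\overline{\mathbb R}=\mathbb R\cup\{\pm\infty\}$; $\operatorname{dom} f=\{x:f(x)<+\infty\}$; proper: $\operatorname{dom} f\ne\emptyset$ and $f>-\infty$. $[x,y]=\{x+t(y-x):t\in[0,1]\}$. Definition (segment-dense): for a convex set $V$ and $U\subseteq V$, $U$ is segment-dense in $V$ if for each $x\in V$ there exists $y\in U$ such that $x$ is a cluster point of $[x,y]\cap U$. *)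

From Stdlib Require Import Reals.
Open Scope R_scope.

Record LCTVS := {
  car :> Type;
  vadd : car -> car -> car;
  vscal : R -> car -> car;
  vzero : car;
  vopp : car -> car;
  vadd_assoc : forall x y z, vadd x (vadd y z) = vadd (vadd x y) z;
  vadd_comm : forall x y, vadd x y = vadd y x;
  vadd_0 : forall x, vadd x vzero = x;
  vadd_opp : forall x, vadd x (vopp x) = vzero;
  vscal_assoc : forall a b x, vscal a (vscal b x) = vscal (a * b) x;
  vscal_1 : forall x, vscal 1 x = x;
  vscal_distr_v : forall a x y, vscal a (vadd x y) = vadd (vscal a x) (vscal a y);
  vscal_distr_r : forall a b x, vscal (a + b) x = vadd (vscal a x) (vscal b x);
  is_open : (car -> Prop) -> Prop;
  open_full : is_open (fun _ => True);
  open_inter : forall A B, is_open A -> is_open B -> is_open (fun x => A x /\ B x);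
  open_union : forall F : (car -> Prop) -> Prop,
      (forall A, F A -> is_open A) -> is_open (fun x => exists A, F A /\ A x);
  vadd_cont : forall x y W, is_open W -> W (vadd x y) ->
      exists A B, is_open A /\ is_open B /\ A x /\ B y /\
        forall u v, A u -> B v -> W (vadd u v);
  vscal_cont : forall a x W, is_open W -> W (vscal a x) ->
      exists eps A, 0 < eps /\ is_open A /\ A x /\
        forall b u, Rabs (b - a) < eps -> A u -> W (vscal b u);
  hausdorff : forall x y, x <> y ->
      exists A B, is_open A /\ is_open B /\ A x /\ B y /\ forall z, ~ (A z /\ B z);
  locally_convex : forall x W, is_open W -> W x ->
      exists C, is_open C /\ C x /\ (forall z, C z -> W z) /\
        forall u v t, C u -> C v -> 0 <= t <= 1 ->
          C (vadd u (vscal t (vadd v (vopp u))))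
}.

Arguments vadd {_}. Arguments vscal {_}. Arguments vopp {_}. Arguments is_open {_}.

Inductive ER := Fin (r : R) | PInf | MInf.

Definition ER_le (a b : ER) : Prop :=
  match a, b with
  | MInf, _ => True
  | _, PInf => True
  | Fin x, Fin y => x <= y
  | _, _ => False
  end.

Definition ER_lt (a b : ER) : Prop := ER_le a b /\ a <> b.

Section Fun.
Context {X : LCTVS}.

Definition segpt (x y : X) (t : R) : X := vadd x (vscal t (vadd y (vopp x))).
Definition segment (x y : X) : X -> Prop :=
  fun z => exists t, 0 <= t <= 1 /\ z = segpt x y t.

Definition dom (f : X -> ER) : X -> Prop := fun x => f x <> PInf.

Definition proper (f : X -> ER) : Prop :=
  (exists x, dom f x) /\ forall x, f x <> MInf.

(** convexity of an extended-real function: convexity of its epigraph *)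
Definition convex_fun (f : X -> ER) : Prop :=
  forall x y a b t, ER_le (f x) (Fin a) -> ER_le (f y) (Fin b) -> 0 <= t <= 1 ->
    ER_le (f (segpt x y t)) (Fin (a + t * (b - a))).

Definition lsc (f : X -> ER) : Prop :=
  forall x r, ER_lt (Fin r) (f x) ->
    exists W, is_open W /\ W x /\ forall z, W z -> ER_lt (Fin r) (f z).

Definition convex_set (V : X -> Prop) : Prop :=
  forall u v t, V u -> V v -> 0 <= t <= 1 -> V (segpt u v t).

Definition cluster_point (x : X) (S : X -> Prop) : Prop :=
  forall W, is_open W -> W x -> exists z, W z /\ S z /\ z <> x.

Definition segment_dense (U V : X -> Prop) : Prop :=
  forall x, V x -> exists y, U y /\ cluster_point x (fun z => segment x y z /\ U z).
End Fun.

(** Suppose [f x > g x] at a common point [x] of the domains, and pick [y] in [U]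
    such that [x] clusters on [[x,y] ∩ U].  By lower semicontinuity [f] stays
    above [(f x + g x)/2] near [x], whereas by convexity [g] stays below it on an
    initial piece [[x, x + δ(y - x)]] of the segment.  Hausdorffness and local
    convexity separate [x] from the rest of the segment, so points of [U] close to
    [x] lie on that initial piece, where [f = g]: a contradiction. *)

From Stdlib Require Import Reals Lra.
Local Open Scope R_scope.

Section SegmentAlgebra.
Variable X : LCTVS.

Lemma vadd_oppK (x z : X) : vadd (vadd x z) (vopp x) = z.
Proof. rewrite (vadd_comm X x z), <- vadd_assoc, vadd_opp, vadd_0. reflexivity. Qed.

Lemma vadd_opp_eq0 (x y : X) : vadd y (vopp x) = vzero X -> y = x.
Proof.
  intros H. rewrite <- (vadd_0 X y), <- (vadd_opp X x), (vadd_comm X x).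
  rewrite vadd_assoc, H, vadd_comm, vadd_0. reflexivity.
Qed.

Lemma vadd_idem_eq0 (u : X) : u = vadd u u -> u = vzero X.
Proof.
  intros H. pose proof (vadd_opp X u) as E.
  rewrite H in E at 1. rewrite <- vadd_assoc, vadd_opp, vadd_0 in E. exact E.
Qed.

Lemma vscal_zero (t : R) : vscal t (vzero X) = vzero X.
Proof. apply vadd_idem_eq0. rewrite <- vscal_distr_v, vadd_0. reflexivity. Qed.

Lemma vscal_eq0 (t : R) (v : X) : t <> 0 -> vscal t v = vzero X -> v = vzero X.
Proof.
  intros Ht H. rewrite <- (vscal_1 X v). replace 1 with (/ t * t) by (field; exact Ht).
  rewrite <- vscal_assoc, H, vscal_zero. reflexivity.
Qed.

Lemma segpt_diag (x : X) (t : R) : segpt x x t = x.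
Proof. unfold segpt. rewrite vadd_opp, vscal_zero, vadd_0. reflexivity. Qed.

Lemma segpt_segpt (x y : X) (s t : R) : segpt x (segpt x y t) s = segpt x y (s * t).
Proof. unfold segpt at 1 2. rewrite vadd_oppK, vscal_assoc. reflexivity. Qed.

Lemma segpt_eq_start (x y : X) (t : R) : t <> 0 -> segpt x y t = x -> y = x.
Proof.
  intros Ht H. apply vadd_opp_eq0, (vscal_eq0 t); [exact Ht|].
  rewrite <- (vadd_oppK x (vscal t (vadd y (vopp x)))). fold (segpt x y t).
  rewrite H, vadd_opp. reflexivity.
Qed.

End SegmentAlgebra.

Section SegmentTopology.
Variable X : LCTVS.

(* A convex neighbourhood of [x] avoiding the point with parameter [δ] can only
   contain points of the segment with smaller parameters. *)
Lemma segment_nbhd_small_param (x y : X) (del : R) :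
  y <> x -> 0 < del <= 1 ->
  exists C, is_open C /\ C x /\
    forall t, 0 <= t <= 1 -> C (segpt x y t) -> t < del.
Proof.
  intros Hyx Hdel.
  assert (Hw : x <> segpt x y del).
  { intro H. apply Hyx, (segpt_eq_start X x y del); [lra|symmetry; exact H]. }
  destruct (hausdorff X _ _ Hw) as [A [B [OA [OB [Ax [Bw Dis]]]]]].
  destruct (locally_convex X x A OA Ax) as [C [OC [Cx [CA Cconv]]]].
  exists C; split; [exact OC|split; [exact Cx|]].
  intros t Ht Ct. destruct (Rlt_or_le t del) as [Hlt|Hge]; [exact Hlt|exfalso].
  assert (Hratio : 0 <= del / t <= 1).
  { split; [unfold Rdiv; apply Rmult_le_pos; [lra|left; apply Rinv_0_lt_compat; lra]|].
    apply (Rmult_le_reg_r t); [lra|]. unfold Rdiv. rewrite Rmult_assoc, Rinv_l; lra. }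
  pose proof (Cconv x (segpt x y t) (del / t) Cx Ct Hratio) as Cw.
  fold (segpt x (segpt x y t) (del / t)) in Cw.
  rewrite segpt_segpt in Cw. replace (del / t * t) with del in Cw by (field; lra).
  exact (Dis _ (conj (CA _ Cw) Bw)).
Qed.

Lemma cluster_segment_neq (x y : X) (P : X -> Prop) :
  cluster_point x (fun z => segment x y z /\ P z) -> y <> x.
Proof.
  intros Cl Hyx. subst y.
  destruct (Cl _ (open_full X) I) as [z [_ [[[t [_ ->]] _] Hz]]].
  exact (Hz (segpt_diag X x t)).
Qed.

Lemma cluster_segment_small_param (x y : X) (P : X -> Prop) (W : X -> Prop) (del : R) :
  cluster_point x (fun z => segment x y z /\ P z) ->
  is_open W -> W x -> 0 < del ->
  exists t, 0 <= t < del /\ t <= 1 /\ P (segpt x y t) /\ W (segpt x y t).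
Proof.
  intros Cl OW Wx Hdel.
  destruct (segment_nbhd_small_param x y (Rmin del 1) (cluster_segment_neq x y P Cl))
    as [C [OC [Cx Csmall]]].
  { split; [apply Rmin_glb_lt; lra|apply Rmin_r]. }
  destruct (Cl _ (open_inter X W C OW OC) (conj Wx Cx))
    as [z [[Wz Cz] [[[t [Ht ->]] Pz] _]]].
  pose proof (Csmall t Ht Cz). pose proof (Rmin_l del 1).
  exists t. repeat split; solve [lra | assumption].
Qed.

End SegmentTopology.

Lemma affine_lt_near0 (b d r : R) :
  b < r -> exists del, 0 < del /\ forall t, 0 <= t < del -> b + t * (d - b) < r.
Proof.
  intros Hbr. pose proof (Rabs_pos (d - b)) as Habs.
  exists ((r - b) / (Rabs (d - b) + 1)).
  split; [apply Rdiv_lt_0_compat; lra|].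
  intros t [Ht0 Ht]. apply Rmult_lt_compat_r with (r := Rabs (d - b) + 1) in Ht; [|lra].
  unfold Rdiv in Ht. rewrite Rmult_assoc, Rinv_l in Ht by lra.
  assert (t * (d - b) <= t * Rabs (d - b)) by (apply Rmult_le_compat_l; [lra|apply Rle_abs]).
  lra.
Qed.

Lemma ER_lt_le_Fin (r s : R) (e : ER) : ER_lt (Fin r) e -> ER_le e (Fin s) -> r < s.
Proof.
  unfold ER_lt. destruct e as [e| |]; simpl; intros [Hre Hne] Hes; try contradiction.
  assert (r <> e) by (intro; apply Hne; subst; reflexivity). lra.
Qed.

Lemma dom_le_Fin {X : LCTVS} (g : X -> ER) (y : X) : dom g y -> exists d, ER_le (g y) (Fin d).
Proof.
  unfold dom. destruct (g y) as [d| |]; intro Hy.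
  - exists d. apply Rle_refl.
  - contradiction.
  - exists 0. exact I.
Qed.

Lemma segment_dense_sub {X : LCTVS} (U V V' : X -> Prop) :
  (forall x, V' x -> V x) -> segment_dense U V -> segment_dense U V'.
Proof. intros HV SD x Hx. exact (SD x (HV x Hx)). Qed.

Lemma le_of_segment_dense {X : LCTVS} (f g : X -> ER) (U : X -> Prop) :
  lsc f -> convex_fun g ->
  (forall u, U u -> dom g u) ->
  segment_dense U (fun x => dom f x /\ dom g x) ->
  (forall u, U u -> f u = g u) ->
  forall x a b, f x = Fin a -> g x = Fin b -> a <= b.
Proof.
  intros lf cg HU SD E x a b Fa Gb.
  destruct (Rle_or_lt a b) as [|Hba]; [assumption|exfalso].
  assert (Dx : dom f x /\ dom g x) by (unfold dom; rewrite Fa, Gb; split; discriminate).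
  destruct (SD x Dx) as [y [Uy Cl]].
  destruct (dom_le_Fin g y (HU y Uy)) as [d Gy].
  set (r := (a + b) / 2).
  destruct (lf x r) as [W [OW [Wx fW]]].
  { rewrite Fa. split; [simpl; unfold r; lra|intro H; injection H; unfold r; lra]. }
  destruct (affine_lt_near0 b d r) as [del [Hdel Hsmall]]; [unfold r; lra|].
  destruct (cluster_segment_small_param X x y U W del Cl OW Wx Hdel)
    as [t [Ht [Ht1 [Uz Wz]]]].
  assert (Hg : ER_le (g (segpt x y t)) (Fin (b + t * (d - b)))).
  { apply cg; [rewrite Gb; apply Rle_refl|exact Gy|lra]. }
  pose proof (fW _ Wz) as Hf. rewrite (E _ Uz) in Hf.
  pose proof (ER_lt_le_Fin _ _ _ Hf Hg). pose proof (Hsmall t Ht). lra.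
Qed.

Theorem mainTheorem6 (X : LCTVS) (f g : X -> ER) :
  proper f -> convex_fun f -> lsc f ->
  proper g -> convex_fun g -> lsc g ->
  forall U : X -> Prop,
    (forall u, U u -> dom f u /\ dom g u) ->
    segment_dense U (fun x => dom f x /\ dom g x) ->
    (forall u, U u -> f u = g u) ->
    forall x, dom f x -> dom g x -> f x = g x.
Proof.
  intros [_ pf] cf lf [_ pg] cg lg U HU SD E x Df Dg.
  destruct (f x) as [a| |] eqn:Fa; [|now elim Df|now elim (pf x)].
  destruct (g x) as [b| |] eqn:Gb; [|now elim Dg|now elim (pg x)].
  assert (SD' : segment_dense U (fun x => dom g x /\ dom f x)).
  { apply (segment_dense_sub U _ _ (fun z Hz => conj (proj2 Hz) (proj1 Hz)) SD). }
  f_equal. apply Rle_antisym.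
  - exact (le_of_segment_dense f g U lf cg (fun u Hu => proj2 (HU u Hu)) SD E x a b Fa Gb).
  - refine (le_of_segment_dense g f U lg cf (fun u Hu => proj1 (HU u Hu)) SD' _ x b a Gb Fa).
    intros u Hu. symmetry. exact (E u Hu).
Qed.
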